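(* Let $n\ge1$, let $\Omega=\begin{pmatrix}0&I_n\\-I_n&0\end{pmatrix}$ and $C(X,Y)=X\Omega Y^T$ for row vectors $X,Y\in\mathbb C^{2n}$. Let $F(x)=(f_0(x),\dots,f_{2n-1}(x))$ be a vector of $2n$ (sufficiently differentiable) functions of $x$ satisfying $$C(F^{(i)},F^{(i+1)})=0\ \ (0\le i\le n-2),\qquad C(F^{(n-1)},F^{(n)})=-1.$$ Then the $(n+1)\times 2n$ matrix whose rows are, from top to bottom, $F^{(n)},F,F',\dots,F^{(n-1)}$ can be completed to a symplectic matrix $\Phi(x)\in Sp(2n,\mathbb C)$ (i.e. $\Phi\Omega\Phi^T=\Omega$) by adding $n-1$ rows on the top; that is, there is $\Phi(x)\in Sp(2n,\mathbb C)$ whose $n$-th row is $F^{(n)}$ and whose $(n+i)$-th row is $F^{(i-1)}$ for $1\le i\le n$.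
   Context: $F^{(j)}$ denotes the componentwise $j$-th derivative of $F$ with respect to $x$. *)

From HB Require Import structures.
From mathcomp Require Import all_boot all_order all_algebra.
From mathcomp Require Import all_classical all_reals all_analysis.
From mathcomp Require Import complex.
Set Implicit Arguments. Unset Strict Implicit. Unset Printing Implicit Defensive.
Import Order.TTheory GRing.Theory Num.Theory numFieldNormedType.Exports.
Local Open Scope ring_scope.

Definition Omega (R : realType) (n : nat) : 'M[R[i]]_(n + n) :=
  block_mx 0 1%:M (- 1%:M) 0.

Definition Cform (R : realType) (n : nat) (X Y : 'rV[R[i]]_(n + n)) : 'M[R[i]]_1 :=
  X *m Omega R n *m Y^T.

Definition symplectic (R : realType) (n : nat) (Phi : 'M[R[i]]_(n + n)) : Prop :=
  Phi *m Omega R n *m Phi^T = Omega R n.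

Definition cderive_n (R : realType) (j : nat) (g : R -> R[i]) : R -> R[i] :=
  fun x => Complex (derive1n j (fun t => complex.Re (g t)) x)
                   (derive1n j (fun t => complex.Im (g t)) x).

Definition Fder (R : realType) (m : nat) (j : nat) (F : R -> 'rV[R[i]]_m)
  : R -> 'rV[R[i]]_m :=
  fun x => \row_k cderive_n j (fun t => F t 0 k) x.

Definition smooth_on (R : realType) (m : nat) (U : set R) (F : R -> 'rV[R[i]]_m)
  : Prop :=
  forall (j : nat) (k : 'I_m) (x : R), U x ->
    derivable (derive1n j (fun t => complex.Re (F t 0 k))) x 1 /\
    derivable (derive1n j (fun t => complex.Im (F t 0 k))) x 1.

From HB Require Import structures.
From mathcomp Require Import all_boot all_order all_algebra.
From mathcomp Require Import all_classical all_reals all_analysis.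
From mathcomp Require Import complex.
From mathcomp Require Import ring zify.
Set Implicit Arguments. Unset Strict Implicit. Unset Printing Implicit Defensive.
Import Order.TTheory GRing.Theory Num.Theory numFieldNormedType.Exports.
Local Open Scope ring_scope.

(* Write g i j for the pairing C(F^(i), F^(j)).  By the Leibniz rule
   (g i j)' = g (i+1) j + g i (j+1), so a pairing vanishing on the open set U
   propagates along the next anti-diagonal: starting from g i i = 0 and the
   hypotheses, g i j = 0 whenever i + j <= 2n-2, and
   g (n-1-k) (n+k) = (-1)^k g (n-1) n = (-1)^(k+1).
   Thus the rows L = (F, ..., F^(n-1)) span a Lagrangian subspace, and against
   H = (F^(2n-1), ..., F^(n)) they pair by a triangular matrix with unit
   diagonal whose last row is a unit vector.  Hence E0 = (H Omega L^T)^-1 H is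
   dual to L and still ends with the row F^(n).  Finally E0 Omega E0^T = S - S^T
   with S strictly upper triangular, so E = E0 + S L is Lagrangian, dual to L,
   and has the same last row as E0; the matrix (E; L) is symplectic. *)

Section ComplexDerivative.
Variable R : realType.
Local Notation Re := complex.Re.
Local Notation Im := complex.Im.
Implicit Types (u v : R -> R[i]) (x : R) (c d du dv : R[i]).

Lemma ReD c d : Re (c + d) = Re c + Re d. Proof. by case: c d => a b [? ?]. Qed.
Lemma ImD c d : Im (c + d) = Im c + Im d. Proof. by case: c d => a b [? ?]. Qed.
Lemma ReN c : Re (- c) = - Re c. Proof. by case: c. Qed.
Lemma ImN c : Im (- c) = - Im c. Proof. by case: c. Qed.
Lemma ReM c d : Re (c * d) = Re c * Re d - Im c * Im d.
Proof. by case: c d => a b [? ?]. Qed.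
Lemma ImM c d : Im (c * d) = Re c * Im d + Im c * Re d.
Proof. by case: c d => a b [? ?]; rewrite /= addrC. Qed.

Definition is_cderive u x d :=
  is_derive x (1 : R) (fun t => Re (u t)) (Re d) /\
  is_derive x (1 : R) (fun t => Im (u t)) (Im d).

Lemma eq_is_cderive u v x du dv :
  u =1 v -> du = dv -> is_cderive u x du -> is_cderive v x dv.
Proof. by move=> /funext <- <-. Qed.

Lemma is_cderive_cst c x : is_cderive (fun=> c) x 0.
Proof. by split; apply: is_derive_cst. Qed.

Lemma is_cderiveD u v x du dv : is_cderive u x du -> is_cderive v x dv ->
  is_cderive (fun t => u t + v t) x (du + dv).
Proof.
move=> [uR uI] [vR vI]; split; rewrite ?ReD ?ImD.
- have -> : (fun t => Re (u t + v t)) = (fun t => Re (u t)) + (fun t => Re (v t)).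
    by apply/funext => t; rewrite ReD.
  exact: is_deriveD.
- have -> : (fun t => Im (u t + v t)) = (fun t => Im (u t)) + (fun t => Im (v t)).
    by apply/funext => t; rewrite ImD.
  exact: is_deriveD.
Qed.

Lemma is_cderiveN u x du : is_cderive u x du -> is_cderive (fun t => - u t) x (- du).
Proof.
move=> [uR uI]; split; rewrite ?ReN ?ImN.
- have -> : (fun t => Re (- u t)) = - (fun t => Re (u t)).
    by apply/funext => t; rewrite ReN.
  exact: is_deriveN.
- have -> : (fun t => Im (- u t)) = - (fun t => Im (u t)).
    by apply/funext => t; rewrite ImN.
  exact: is_deriveN.
Qed.

Lemma is_cderiveM u v x du dv : is_cderive u x du -> is_cderive v x dv ->
  is_cderive (fun t => u t * v t) x (du * v x + u x * dv).
Proof.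
move=> [uR uI] [vR vI]; split.
- have -> : (fun t => Re (u t * v t)) = (fun t => Re (u t)) * (fun t => Re (v t))
      - (fun t => Im (u t)) * (fun t => Im (v t)).
    by apply/funext => t; rewrite ReM.
  by apply: is_derive_eq; rewrite ReD !ReM /= /GRing.scale /=; ring.
- have -> : (fun t => Im (u t * v t)) = (fun t => Re (u t)) * (fun t => Im (v t))
      + (fun t => Im (u t)) * (fun t => Re (v t)).
    by apply/funext => t; rewrite ImM.
  by apply: is_derive_eq; rewrite ImD !ImM /= /GRing.scale /=; ring.
Qed.

Lemma is_cderive_sum m (u : 'I_m -> R -> R[i]) (du : 'I_m -> R[i]) x :
  (forall k, is_cderive (u k) x (du k)) ->
  is_cderive (fun t => \sum_(k < m) u k t) x (\sum_(k < m) du k).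
Proof.
elim: m u du => [|m IH] u du u_der.
  by apply: eq_is_cderive (is_cderive_cst 0 x) => [t|]; rewrite big_ord0.
pose w := widen_ord (leqnSn m).
have := is_cderiveD (IH (u \o w) (du \o w) (fun k => u_der (w k))) (u_der ord_max).
by apply: eq_is_cderive => [t|]; rewrite big_ord_recr.
Qed.

Lemma is_cderive_near_cst u x c d :
  (\forall t \near x, u t = c) -> is_cderive u x d -> d = 0.
Proof.
move=> u_cst [uR uI].
have dR0 : is_derive x (1 : R) (fun t => Re (u t)) 0.
  apply: near_eq_is_derive (is_derive_cst (Re c) x 1).
  by near=> t; rewrite /cst (near u_cst t).
have dI0 : is_derive x (1 : R) (fun t => Im (u t)) 0.
  apply: near_eq_is_derive (is_derive_cst (Im c) x 1).
  by near=> t; rewrite /cst (near u_cst t).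
have Re_d : Re d = 0.
  by rewrite -(@derive_val _ _ _ _ _ _ _ uR) (@derive_val _ _ _ _ _ _ _ dR0).
have Im_d : Im d = 0.
  by rewrite -(@derive_val _ _ _ _ _ _ _ uI) (@derive_val _ _ _ _ _ _ _ dI0).
by move: Re_d Im_d; case: d {uR uI} => a b /= -> ->.
Unshelve. all: by end_near.
Qed.

Lemma is_cderive_cderive_n j u x :
  derivable (derive1n j (fun t => Re (u t))) x 1 ->
  derivable (derive1n j (fun t => Im (u t))) x 1 ->
  is_cderive (cderive_n j u) x (cderive_n j.+1 u x).
Proof. by move=> dR dI; split => /=; rewrite derive1E; apply: derivableP. Qed.

End ComplexDerivative.

Section StandardSymplecticForm.
Variables (R : realType) (n : nat).
Implicit Types X Y : 'rV[R[i]]_(n + n).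

Lemma Cform_entry X Y : Cform X Y 0 0 =
  \sum_(k < n) (X 0 (lshift n k) * Y 0 (rshift n k) - X 0 (rshift n k) * Y 0 (lshift n k)).
Proof.
rewrite /Cform /Omega -{1}[X]hsubmxK -{1}[Y]hsubmxK mul_row_block tr_row_mx mul_row_col.
rewrite !mulmx0 !mulmxN !mulmx1 add0r addr0 !mxE -big_split /=.
by apply: eq_bigr => k _; rewrite !mxE; ring.
Qed.

Lemma Cform_alt X : Cform X X 0 0 = 0.
Proof. by rewrite Cform_entry big1 // => k _; ring. Qed.

Lemma trmx_Omega : (Omega R n)^T = - Omega R n.
Proof.
by rewrite /Omega tr_block_mx !trmx0 linearN /= trmx1 opp_block_mx !oppr0 opprK.
Qed.

End StandardSymplecticForm.

Section GramDerivative.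
Variables (R : realType) (n : nat) (U : set R) (F : R -> 'rV[R[i]]_(n + n)).

Definition gram i j t := Cform (Fder i F t) (Fder j F t) 0 0.

Hypothesis F_smooth : smooth_on U F.

Lemma is_cderive_Fder i k x : U x ->
  is_cderive (fun t => Fder i F t 0 k) x (Fder i.+1 F x 0 k).
Proof.
move=> Ux; have [dR dI] := F_smooth i k Ux.
by apply: eq_is_cderive (is_cderive_cderive_n dR dI) => [t|]; rewrite mxE.
Qed.

Lemma is_cderive_gram i j x : U x ->
  is_cderive (gram i j) x (gram i.+1 j x + gram i j.+1 x).
Proof.
move=> Ux; pose d l k := is_cderive_Fder l k Ux.
have := is_cderive_sum (fun k => is_cderiveD
  (is_cderiveM (d i (lshift n k)) (d j (rshift n k)))
  (is_cderiveN (is_cderiveM (d i (rshift n k)) (d j (lshift n k))))).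
apply: eq_is_cderive => [t|]; first by rewrite /gram Cform_entry.
by rewrite /gram !Cform_entry -big_split; apply: eq_bigr => k _ /=; ring.
Qed.

Lemma gram_vanishS i j : open U -> (forall t, U t -> gram i j t = 0) ->
  forall t, U t -> gram i.+1 j t + gram i j.+1 t = 0.
Proof.
move=> U_open g0 t Ut; apply: (is_cderive_near_cst (c := 0)) (is_cderive_gram i j Ut).
by apply: filterS (open_nbhs_nbhs (conj U_open Ut)) => s /g0.
Qed.

End GramDerivative.

(* g abstracts the pairings C(F^(i), F^(j)); g_vanishS is the Leibniz rule
   applied to a pairing that vanishes identically on U. *)
Section VanishingPairings.
Variables (K : pzRingType) (T : Type) (U : set T) (n : nat) (g : nat -> nat -> T -> K).
Hypotheses (g_alt : forall i t, g i i t = 0) (g_anti : forall i j t, g j i t = - g i j t).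
Hypothesis g_vanishS : forall i j, (forall t, U t -> g i j t = 0) ->
  forall t, U t -> g i.+1 j t + g i j.+1 t = 0.
Hypothesis g_consec : forall i t, U t -> (i.+2 <= n)%N -> g i i.+1 t = 0.

Lemma g_vanish_upper d i t : U t -> (i + (i + d) <= n + n - 2)%N -> g i (i + d) t = 0.
Proof.
elim/ltn_ind: d i t => -[|[|d]] IH i t Ut hi; first by rewrite addn0.
  by rewrite addn1 g_consec //; lia.
have g_next := g_vanishS (fun s Us => IH d.+1 (ltnSn _) i s Us ltac:(lia)) Ut.
have g_inner : g i.+1 (i + d.+1) t = 0.
  by rewrite addnS -addSn IH //; lia.
by rewrite g_inner add0r -addnS in g_next.
Qed.

Lemma g_vanish i j t : U t -> (i + j <= n + n - 2)%N -> g i j t = 0.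
Proof.
move=> Ut hij; have [ij|/ltnW ji] := leqP i j.
  by rewrite -(subnKC ij) g_vanish_upper // subnKC.
by rewrite g_anti -(subnKC ji) g_vanish_upper ?oppr0 // subnKC // addnC.
Qed.

Lemma g_antidiag m t : U t -> (m <= n.-1)%N ->
  g (n.-1 - m)%N (n + m) t = (-1) ^+ m * g n.-1 n t.
Proof.
move=> Ut; elim: m => [|m IH] hm; first by rewrite subn0 addn0 mul1r.
have := g_vanishS (fun s Us => @g_vanish (n.-1 - m.+1) (n + m) s Us ltac:(lia)) Ut.
rewrite (_ : (n.-1 - m.+1).+1 = n.-1 - m)%N; last by lia.
rewrite IH 1?ltnW // -addnS => /eqP; rewrite addrC addr_eq0 => /eqP ->.
by rewrite exprS mulN1r mulNr.
Qed.

End VanishingPairings.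

Section StrictUpper.
Variables (V : zmodType) (p : nat).
Implicit Type A : 'M[V]_p.

Definition strict_upper A : 'M[V]_p := \matrix_(a, b) if (a < b)%N then A a b else 0.

Lemma alt_strict_upper A : A^T = - A -> (forall a, A a a = 0) ->
  A = strict_upper A - (strict_upper A)^T.
Proof.
move=> A_anti A_alt; apply/matrixP => a b; rewrite !mxE.
have Aba : A b a = - A a b by have := congr1 (fun B : 'M[V]_p => B a b) A_anti; rewrite !mxE.
case: (ltngtP a b) => [_|_|/val_inj ->]; first by rewrite subr0.
  by rewrite sub0r Aba opprK.
by rewrite A_alt subr0.
Qed.

Lemma row_strict_upper_max A (i0 : 'I_p) :
  (forall b : 'I_p, (b <= i0)%N) -> row i0 (strict_upper A) = 0.
Proof. by move=> i0_max; apply/rowP => b; rewrite !mxE ltnNge i0_max. Qed.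

End StrictUpper.

Section AlternatingForm.
Variables (T : comUnitRingType) (m : nat) (Om : 'M[T]_m).
Hypotheses (trmx_Om : Om^T = - Om) (Om_alt : forall x : 'rV[T]_m, (x *m Om *m x^T) 0 0 = 0).
Local Notation form X Y := (X *m Om *m Y^T).

Lemma trmx_form p q (X : 'M[T]_(p, m)) (Y : 'M[T]_(q, m)) : (form X Y)^T = - form Y X.
Proof. by rewrite !trmx_mul trmxK trmx_Om mulNmx mulmxN mulmxA. Qed.

Lemma form_entry p q (X : 'M[T]_(p, m)) (Y : 'M[T]_(q, m)) a b :
  form X Y a b = form (row a X) (row b Y) 0 0.
Proof.
rewrite !mxE; apply: eq_bigr => k _; rewrite !mxE; congr (_ * _).
by apply: eq_bigr => l _; rewrite !mxE.
Qed.

Lemma form_anti p q (X : 'M[T]_(p, m)) (Y : 'M[T]_(q, m)) a b :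
  form Y X b a = - form X Y a b.
Proof. by rewrite -[form Y X]opprK -trmx_form !mxE. Qed.

Lemma form_alt p (X : 'M[T]_(p, m)) a : form X X a a = 0.
Proof. by rewrite form_entry Om_alt. Qed.

Lemma lagrangian_complement p (E0 L : 'M[T]_(p, m)) (i0 : 'I_p) :
  (forall b : 'I_p, (b <= i0)%N) -> form L L = 0 -> form E0 L = 1%:M ->
  exists2 E, form E E = 0 /\ form E L = 1%:M & row i0 E = row i0 E0.
Proof.
move=> i0_max LL E0L; pose S := strict_upper (form E0 E0).
have LE0 : form L E0 = - 1%:M by rewrite -[LHS]opprK -trmx_form E0L trmx1.
have SLL : form (S *m L) L = 0 by rewrite -!mulmxA [L *m _]mulmxA LL mulmx0.
exists (E0 + S *m L); last first.
  by rewrite linearD /= row_mul row_strict_upper_max // mul0mx addr0.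
split; last by rewrite mulmxDl mulmxDl SLL E0L addr0.
have E0SL : form E0 (S *m L) = S^T by rewrite trmx_mul mulmxA E0L mul1mx.
have SLE0 : form (S *m L) E0 = - S by rewrite -!mulmxA (mulmxA L) LE0 mulmxN mulmx1.
have SLSL : form (S *m L) (S *m L) = 0 by rewrite trmx_mul mulmxA SLL mul0mx.
rewrite linearD /= !mulmxDl !mulmxDr E0SL SLE0 SLSL addr0.
by rewrite (alt_strict_upper (trmx_form E0 E0) (form_alt E0)) -/S subrK subrr.
Qed.

Lemma darboux_block p (E L : 'M[T]_(p, m)) :
  form E E = 0 -> form L L = 0 -> form E L = 1%:M ->
  form (col_mx E L) (col_mx E L) = block_mx 0 1%:M (- 1%:M) 0.
Proof.
move=> EE LL EL; rewrite tr_col_mx mul_col_mx mul_col_row EE EL LL.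
by rewrite -[form L E]opprK -trmx_form EL trmx1.
Qed.

Variables (n : nat) (v : nat -> 'rV[T]_m).
Hypotheses (n_gt0 : (0 < n)%N)
  (v_isotropic : forall i j, (i + j <= n + n - 2)%N -> form (v i) (v j) 0 0 = 0)
  (v_antidiag_unit : forall k, (k <= n.-1)%N ->
     form (v (n.-1 - k)%N) (v (n + k)%N) 0 0 \is a GRing.unit)
  (v_norm : form (v n.-1) (v n) 0 0 = -1).

Let L : 'M[T]_(n, m) := \matrix_(b < n) v b.
Let H : 'M[T]_(n, m) := \matrix_(a < n) v (n + (n.-1 - a)).
Let last_row : 'I_n := Ordinal (etrans (ltn_predL n) n_gt0).

Lemma lagrangian_L : form L L = 0.
Proof.
apply/matrixP => a b; rewrite form_entry !rowK v_isotropic ?mxE //.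
by have := ltn_ord a; have := ltn_ord b; lia.
Qed.

Lemma unitmx_form_H_L : form H L \in unitmx.
Proof.
have trig : is_trig_mx (form H L)^T.
  apply/is_trig_mxP => a b ab.
  by rewrite [_^T a b]mxE form_entry !rowK v_isotropic //; have := ltn_ord b; lia.
rewrite unitmxE -det_tr (det_trig trig) unitr_prod // => a _.
rewrite [_^T a a]mxE form_entry form_anti !rowK unitrN.
have {1}-> : a = (n.-1 - (n.-1 - a))%N :> nat by have := ltn_ord a; lia.
by rewrite v_antidiag_unit ?leq_subr.
Qed.

Lemma row_last_form_H_L : row last_row (form H L) = row last_row 1%:M.
Proof.
apply/rowP => b; rewrite [LHS]mxE [RHS]mxE [RHS]mxE form_entry !rowK /= subnn addn0.
have [b_lt|b_gt|/val_inj ->] := ltngtP b last_row.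
- rewrite v_isotropic; last by move: b_lt => /=; lia.
  by case: eqP b_lt => // <-; rewrite ltnn.
- by have := ltn_ord b; move: b_gt => /=; lia.
by rewrite form_anti v_norm opprK eqxx.
Qed.

Lemma symplectic_completion : exists Phi : 'M[T]_(n + n, m),
  [/\ form Phi Phi = block_mx 0 1%:M (- 1%:M) 0,
      forall r : 'I_(n + n), val r = n.-1 -> row r Phi = v n &
      forall (r : 'I_(n + n)) j, val r = (n + j)%N -> row r Phi = v j].
Proof.
pose E0 := invmx (form H L) *m H.
have E0L : form E0 L = 1%:M by rewrite -!mulmxA [H *m _]mulmxA mulVmx ?unitmx_form_H_L.
have E0_last : row last_row E0 = v n.
  rewrite row_mul -[invmx _]mul1mx row_mul -row_last_form_H_L -row_mul.
  by rewrite mulmxV ?unitmx_form_H_L // -row_mul mul1mx rowK /= subnn addn0.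
have last_max (b : 'I_n) : (b <= last_row)%N by rewrite /= -ltnS prednK.
have [E [EE EL] E_last] := lagrangian_complement last_max lagrangian_L E0L.
exists (col_mx E L); split.
- exact: darboux_block lagrangian_L EL.
- move=> r r_last; have -> : r = lshift n last_row by apply: val_inj.
  by rewrite rowKu E_last E0_last.
- move=> r j r_j; have j_lt : (j < n)%N by have := ltn_ord r; rewrite r_j ltn_add2l.
  have -> : r = rshift n (Ordinal j_lt) by apply: val_inj.
  by rewrite rowKd rowK.
Qed.

End AlternatingForm.

Theorem proposition4p3 (R : realType) (n : nat) (U : set R)
    (F : R -> 'rV[R[i]]_(n + n)) :
  (0 < n)%N ->
  open U ->
  smooth_on U F ->
  (forall x, U x -> forall i : nat, (i.+2 <= n)%N ->
      Cform (Fder i F x) (Fder i.+1 F x) = 0) ->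
  (forall x, U x -> Cform (Fder n.-1 F x) (Fder n F x) = - 1%:M) ->
  forall x, U x ->
    exists Phi : 'M[R[i]]_(n + n),
      symplectic Phi /\
      (forall r : 'I_(n + n), val r = n.-1 -> row r Phi = Fder n F x) /\
      (forall (r : 'I_(n + n)) (j : nat), val r = (n + j)%N ->
          row r Phi = Fder j F x).
Proof.
move=> n_gt0 U_open F_smooth F_consec F_norm x Ux.
have g_alt i t : gram F i i t = 0 by apply: Cform_alt.
have g_anti i j t : gram F j i t = - gram F i j t by apply: (form_anti (trmx_Omega R n)).
have g_vanishS i j := @gram_vanishS R n U F F_smooth i j U_open.
have g_consec i t : U t -> (i.+2 <= n)%N -> gram F i i.+1 t = 0.
  by move=> Ut i_lt; rewrite /gram F_consec ?mxE.
have g_norm : gram F n.-1 n x = -1 by rewrite /gram F_norm ?mxE.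
have g_isotropic i j : (i + j <= n + n - 2)%N -> gram F i j x = 0.
  by move=> ij; apply: (g_vanish g_alt g_anti g_vanishS g_consec Ux ij).
have g_antidiag_unit k : (k <= n.-1)%N -> gram F (n.-1 - k) (n + k) x \is a GRing.unit.
  move=> k_le; rewrite (g_antidiag g_alt g_anti g_vanishS g_consec Ux k_le) g_norm.
  by rewrite unitrM unitrX ?unitrN ?unitr1.
have [Phi [Phi_sp Phi_last Phi_low]] := symplectic_completion (trmx_Omega R n)
  (@Cform_alt R n) (v := fun j => Fder j F x) n_gt0 g_isotropic g_antidiag_unit g_norm.
by exists Phi; do !split.
Qed.
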